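(* Let $p$ be a real polynomial with $\lim_{|x|\to\infty}p(x)=\infty$. (1) Suppose $p'$ is positive and increasing on an interval $(x_0,x_f)$, where $x_f$ may be $+\infty$, and, if $x_f<\infty$, that $p(x_f)\ge p(x_0)+1$. Then $\int_{x_0}^{x_f}e^{-p(x)}\,dx\approx e^{-p(x_0)}\,|\{x\in(x_0,x_f):p(x_0)<p(x)<p(x_0)+1\}|$. (2) Suppose $p'$ is negative and increasing on an interval $(x_f,x_0)$, where $x_f$ may be $-\infty$, and, if $x_f>-\infty$, that $p(x_f)\ge p(x_0)+1$. Then $\int_{x_f}^{x_0}e^{-p(x)}\,dx\approx e^{-p(x_0)}\,|\{x\in(x_f,x_0):p(x_0)<p(x)<p(x_0)+1\}|$. (3) Suppose $p'$ is either (i) positive and increasing on $I=(x_0,x_f)$ with $x_f<\infty$, or (ii) negative and increasing on $I=(x_f,x_0)$ with $x_f>-\infty$, and suppose $p(x_0)<p(x_f)<p(x_0)+1$. Then $\int_Ie^{-p(x)}\,dx\approx e^{-p(x_0)}|x_f-x_0|$.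
   Context: $X\approx Y$ means there is an absolute constant $c>0$ (independent of $p$ and of the interval) with $cY\le X\le c^{-1}Y$; $|E|$ denotes Lebesgue measure. *)

From HB Require Import structures.
From mathcomp Require Import all_boot all_order all_algebra.
From mathcomp Require Import all_classical all_reals all_analysis.
Set Implicit Arguments. Unset Strict Implicit. Unset Printing Implicit Defensive.
Import Order.TTheory GRing.Theory Num.Theory.
Import numFieldNormedType.Exports.
Local Open Scope classical_set_scope.
Local Open Scope ring_scope.

Definition poly_to_pinfty (R : realType) (p : {poly R}) : Prop :=
  (p.[x] @[x --> +oo] --> +oo) /\ (p.[x] @[x --> -oo] --> +oo).

Definition eoitv (R : realType) (a b : \bar R) : set R :=
  [set x : R | (a < x%:E)%E /\ (x%:E < b)%E].

Definition int_exp_neg (R : realType) (p : {poly R}) (I : set R) : \bar R :=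
  (\int[@lebesgue_measure R]_(x in I) (expR (- p.[x]))%:E)%E.

Definition deriv_pos_incr (R : realType) (p : {poly R}) (I : set R) : Prop :=
  (forall x, I x -> 0 < (p^`()).[x]) /\
  (forall x y, I x -> I y -> x < y -> (p^`()).[x] < (p^`()).[y]).

Definition deriv_neg_incr (R : realType) (p : {poly R}) (I : set R) : Prop :=
  (forall x, I x -> (p^`()).[x] < 0) /\
  (forall x y, I x -> I y -> x < y -> (p^`()).[x] < (p^`()).[y]).

Definition approx_with (R : realType) (c : R) (X Y : \bar R) : Prop :=
  (c%:E * Y <= X)%E /\ (X <= c^-1%:E * Y)%E.

From HB Require Import structures.
From mathcomp Require Import all_boot all_order all_algebra.
From mathcomp Require Import all_classical all_reals all_analysis.
From mathcomp Require Import measurable_realfun ftc ring lra.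
Import Order.TTheory GRing.Theory Num.Theory.
Import numFieldNormedType.Exports.
Local Open Scope classical_set_scope.
Local Open Scope ring_scope.

(* Let x1 be the point where f reaches f x0 + 1 (intermediate value theorem).
   Since f is strictly monotone, the level set {f x0 < f < f x0 + 1} is the
   interval between x0 and x1, and on it e^{-f} >= e^{-1} e^{-f x0}: this is
   the lower bound.  Since f' is increasing, f is convex, so
   f x - f x0 >= |x - x0| / |x1 - x0| - 1 on the whole interval, and the
   integral of the resulting exponential majorant over a half-line is
   e e^{-f x0} |x1 - x0|: this is the upper bound.  The decreasing case is the
   increasing one for x |-> f (-x), by reflection invariance of Lebesgue
   measure; in part (3), f stays between f x0 and f x0 + 1 on the whole
   interval.  Hence c = e^{-1} works throughout. *)

Section real_facts.
Context {R : realType}.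
Local Notation mu := (@lebesgue_measure R).

Lemma measurable_eoitv (a b : \bar R) : measurable (eoitv a b).
Proof.
have := @EFin_measurable R setT measurableT _
  (emeasurable_itv (Interval (BRight a) (BLeft b))).
rewrite setTI; congr measurable; apply/seteqP; split => x /=; rewrite in_itv /=;
  by [move=> /andP[] | move=> [-> ->]].
Qed.

Lemma eoitv_itv (a b : R) : eoitv a%:E b%:E = `]a, b[%classic.
Proof.
by apply/seteqP; split => x; rewrite /eoitv /= in_itv /= !lte_fin;
  [case=> -> -> | move=> /andP[]].
Qed.

Lemma eoitvN (a b : \bar R) : -%R @^-1` eoitv a b = eoitv (- b) (- a).
Proof.
apply/seteqP; split => y; rewrite /eoitv /= !EFinN.
- by case=> h1 h2; split; [rewrite lteNl | rewrite lteNr].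
- by case=> h1 h2; split; [rewrite lteNr | rewrite lteNl].
Qed.

Lemma measurable_fun_expRN {f : R -> R} {D : set R} : continuous f ->
  measurable_fun D (fun x => (expR (- f x))%:E).
Proof.
move=> cf; apply/measurable_EFinP; apply: measurable_funTS.
apply: continuous_measurable_fun => x.
apply: continuous_comp; last exact: continuous_expR.
exact: (continuousN (cf x)).
Qed.

Lemma is_derive1_comp {f g : R -> R} {x df dg : R} :
  is_derive x 1 f df -> is_derive (f x) 1 g dg -> is_derive x 1 (g \o f) (dg * df).
Proof.
move=> [f_der <-] [g_der <-]; apply: DeriveDef.
  by apply/derivable1_diffP; apply: differentiable_comp; exact/derivable1_diffP.
by rewrite -derive1E derive1_comp // !derive1E.
Qed.

Lemma is_derive_continuous {f df : R -> R} :
  (forall x : R, is_derive x 1 f (df x)) -> continuous f.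
Proof.
move=> f_der x; apply: differentiable_continuous; apply/derivable1_diffP.
by case: (f_der x).
Qed.

Lemma is_derive_gt0_lt {f df : R -> R} {x y : R} :
  (forall z : R, is_derive z 1 f (df z)) -> x < y ->
  (forall z, x < z < y -> 0 < df z) -> f x < f y.
Proof.
move=> f_der xy df_gt0.
have [c cxy E] := MVT xy (fun z _ => f_der z)
  (continuous_subspaceT (is_derive_continuous f_der)).
by rewrite -subr_gt0 E mulr_gt0 ?subr_gt0 //; apply: df_gt0; move: cxy; rewrite in_itv.
Qed.

Lemma ge0_integral_reflect {D : set R} {g : R -> \bar R} :
  measurable D -> measurable_fun D g -> (forall x, D x -> (0 <= g x)%E) ->
  (\int[mu]_(x in D) g x = \int[mu]_(x in -%R @^-1` D) g (- x)%R)%E.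
Proof.
move=> mD mg g0.
(* view -%R as a map into the measurable type carrying the Lebesgue measure *)
rewrite (_ : -%R @^-1` D = (-%R : _ -> measurableTypeR R) @^-1` D) //.
rewrite -[X in _ = X]ge0_integral_pushforward //=.
  by apply: eq_measure_integral => A mA _; exact/esym/lebesgue_measureN.
by move=> x /set_mem /g0.
Qed.

Section integral_expRN_itv.
Context {f : R -> R} {a b f0 : R}.
Hypotheses (f_cont : continuous f) (ab : a < b).

Let mu_itv : mu `]a, b[%classic = (b - a)%:E.
Proof. by rewrite lebesgue_measure_itv /= lte_fin ab -EFinD. Qed.

Lemma integral_expRN_itv_ge : (forall x, a < x < b -> f x <= f0 + 1) ->
  ((expR (-1) * (expR (- f0) * (b - a)))%:E <=
   \int[mu]_(x in `]a, b[) (expR (- f x))%:E)%E.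
Proof.
move=> f_le; apply: (@le_trans _ _ (\int[mu]_(x in `]a, b[) (expR (- f0 - 1))%:E)%E).
  by rewrite integral_cst //= mu_itv -EFinM mulrA -expRD addrC.
apply: ge0_le_integral => //; first exact: measurable_fun_expRN.
move=> x; rewrite /= in_itv => /f_le fx.
by rewrite lee_fin ler_expR; lra.
Qed.

Lemma integral_expRN_itv_le : (forall x, a < x < b -> f0 <= f x) ->
  (\int[mu]_(x in `]a, b[) (expR (- f x))%:E <= (expR (- f0) * (b - a))%:E)%E.
Proof.
move=> f_ge; apply: (@le_trans _ _ (\int[mu]_(x in `]a, b[) (expR (- f0))%:E)%E).
  apply: ge0_le_integral => //; first exact: measurable_fun_expRN.
  move=> x; rewrite /= in_itv => /f_ge fx.
  by rewrite lee_fin ler_expR; lra.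
by rewrite integral_cst //= mu_itv -EFinM.
Qed.

End integral_expRN_itv.

Lemma is_derive_ramp (c a L x : R) : is_derive x 1 (fun y => c + (y - a) / L) L^-1.
Proof. by apply: is_derive_eq; rewrite scaler0 !add0r subr0 mul1r scaler1. Qed.

Lemma integral_expR_decay (c a L : R) : 0 < L ->
  (\int[mu]_(x in `[a, +oo[) (expR (- (c + (x - a) / L)))%:E = (expR (- c) * L)%:E)%E.
Proof.
move=> L_gt0.
pose h y := c + (y - a) / L.
pose F y := - L * expR (- h y).
have F_der (x : R) : is_derive x 1 F (expR (- h x)).
  have := is_deriveZ (- L) (is_derive1_comp (is_deriveN (is_derive_ramp c a L x))
    (is_derive_expR _)).
  move=> ?; apply: is_derive_eq; rewrite /GRing.scale /=.
  by field; rewrite gt_eqF.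
have h_to_pinfty : h x @[x --> +oo] --> +oo.
  apply/cvgryPge => r; near=> y.
  rewrite /h -lerBlDl ler_pdivlMr // lerBrDl.
  by near: y; apply: nbhs_pinfty_ge; exact: num_real.
rewrite (@ge0_continuous_FTC2y _ _ F a 0).
- by rewrite /F /h subrr mul0r addr0 -EFinB sub0r mulNr opprK mulrC.
- by move=> x _; exact: expR_ge0.
- apply: continuous_subspaceT => x; apply: continuous_comp; last exact: continuous_expR.
  exact/continuousN/(is_derive_continuous (is_derive_ramp c a L)).
- rewrite -(mulr0 (- L)); apply: cvgMl_tmp.
  exact: cvg_comp h_to_pinfty (@cvgr_expR R).
- by move=> x _; case: (F_der x).
- by apply: cvg_at_right_filter; exact: (is_derive_continuous F_der).
- by move=> x _; rewrite derive1E (@derive_val _ _ _ _ _ _ _ (F_der x)).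
Unshelve. all: by end_near. Qed.

End real_facts.

Section increasing_derivative.
Context {R : realType}.
Local Notation mu := (@lebesgue_measure R).
Context {f df : R -> R} {x0 : R} {xf : \bar R}.
Local Notation I := (eoitv x0%:E xf).
Hypothesis f_der : forall x : R, is_derive x 1 f (df x).
Hypothesis df_gt0 : forall x, I x -> 0 < df x.
Hypothesis df_incr : forall x y, I x -> I y -> x < y -> df x < df y.

Let in_I x : x0 < x -> (x%:E < xf)%E -> I x.
Proof. by move=> x0x xxf; split; rewrite ?lte_fin. Qed.

Lemma increasing_derive_lt {a b : R} : x0 <= a -> a < b -> (b%:E <= xf)%E -> f a < f b.
Proof.
move=> x0a ab bxf; apply: is_derive_gt0_lt f_der ab _ => z /andP[az zb].
apply: df_gt0; apply: in_I; first exact: le_lt_trans az.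
by apply: lt_le_trans bxf; rewrite lte_fin.
Qed.

Lemma exists_level_point {r : R} : x0 < r -> (r%:E <= xf)%E -> f x0 + 1 <= f r ->
  exists x1, [/\ x0 < x1, (x1%:E <= xf)%E & f x1 = f x0 + 1].
Proof.
move=> x0r rxf fr.
have [x1 /[!in_itv]/= /andP[x0x1 x1r] fx1] :
    exists2 x1, x1 \in `[x0, r] & f x1 = f x0 + 1.
  apply: IVT; first exact: ltW.
    exact/continuous_subspaceT/(is_derive_continuous f_der).
  by rewrite ge_min lerDl ler01 le_max fr orbT.
exists x1; split => //; last by apply: le_trans rxf; rewrite lee_fin.
by rewrite lt_neqAle x0x1 andbT; apply/eqP => x0E; move: fx1; rewrite -x0E; lra.
Qed.

Context {x1 : R}.
Hypotheses (x0x1 : x0 < x1) (x1xf : (x1%:E <= xf)%E) (f_x1 : f x1 = f x0 + 1).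

Lemma levelset_increasing :
  [set x | I x /\ f x0 < f x < f x0 + 1] = `]x0, x1[%classic.
Proof.
apply/seteqP; split => x /=; rewrite in_itv /=.
- move=> [[x0x xxf] /andP[_]]; rewrite lte_fin in x0x; rewrite x0x -f_x1 => fx_lt.
  rewrite ltNge; apply/negP; rewrite le_eqVlt => /predU1P[x1E|x1x].
    by move: fx_lt; rewrite x1E ltxx.
  by have := increasing_derive_lt (ltW x0x1) x1x (ltW xxf); lra.
- move=> /andP[x0x xx1].
  have xxf : (x%:E < xf)%E by apply: lt_le_trans x1xf; rewrite lte_fin.
  split; first exact: in_I.
  rewrite -f_x1 increasing_derive_lt ?lexx ?ltW //=.
  exact: increasing_derive_lt (ltW x0x) xx1 x1xf.
Qed.

Lemma chord_le_increasing x : I x -> (x - x0) / (x1 - x0) - 1 <= f x - f x0.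
Proof.
move=> [x0x xxf]; rewrite lte_fin in x0x.
have L_gt0 : 0 < x1 - x0 by rewrite subr_gt0.
have [xx1|x1x] := leP x x1.
  have := increasing_derive_lt (lexx x0) x0x (ltW xxf).
  have : (x - x0) / (x1 - x0) <= 1 by rewrite ler_pdivrMr // mul1r lerD2r.
  lra.
have f_cont := continuous_subspaceT (is_derive_continuous f_der).
have [c1 /[!in_itv]/= /andP[x0c1 c1x1] E1] := MVT x0x1 (fun z _ => f_der z) (f_cont _).
have [c2 /[!in_itv]/= /andP[x1c2 c2x] E2] := MVT x1x (fun z _ => f_der z) (f_cont _).
have c1_in : I c1 by apply: in_I => //; apply: lt_le_trans x1xf; rewrite lte_fin.
have c2_in : I c2.
  by apply: in_I; [exact: lt_trans x0x1 x1c2 | apply: lt_trans xxf; rewrite lte_fin].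
have df_c12 := df_incr _ _ c1_in c2_in (lt_trans c1x1 x1c2).
have -> : (x1 - x0)^-1 = df c1.
  by apply: (mulIf (lt0r_neq0 L_gt0)); rewrite mulVf ?gt_eqF // -E1 f_x1; ring.
have : 0 <= (df c2 - df c1) * (x - x1) by rewrite mulr_ge0 // subr_ge0 ltW.
move: E1 E2; rewrite f_x1; nra.
Qed.

Lemma integral_expRN_le_increasing :
  (\int[mu]_(x in I) (expR (- f x))%:E <=
   (expR 1 * (expR (- f x0) * (x1 - x0)))%:E)%E.
Proof.
set L := x1 - x0; have L_gt0 : 0 < L by rewrite subr_gt0.
pose ramp x := f x0 - 1 + (x - x0) / L.
have ramp_cont : continuous ramp := is_derive_continuous (is_derive_ramp _ _ _).
apply: (@le_trans _ _ (\int[mu]_(x in I) (expR (- ramp x))%:E)%E).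
  apply: ge0_le_integral => //.
  - exact: measurable_eoitv.
  - exact: measurable_fun_expRN (is_derive_continuous f_der).
  - exact: measurable_fun_expRN.
  - by move=> x /chord_le_increasing; rewrite lee_fin ler_expR /ramp; lra.
apply: (@le_trans _ _ (\int[mu]_(x in `[x0, +oo[) (expR (- ramp x))%:E)%E).
  apply: ge0_subset_integral => //; first exact: measurable_eoitv.
    exact: measurable_fun_expRN.
  by move=> x [x0x _]; rewrite /= in_itv /= andbT ltW // -lte_fin.
by rewrite integral_expR_decay // opprB expRD mulrA.
Qed.

End increasing_derivative.

Section approx_integral.
Context {R : realType}.
Local Notation mu := (@lebesgue_measure R).

Lemma exists_ge_in_eoitv {f : R -> R} {x0 v : R} {xf : \bar R} :
  (x0%:E < xf)%E -> f x @[x --> +oo] --> +oo ->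
  (forall r : R, xf = r%:E -> v <= f r) ->
  exists r, [/\ x0 < r, (r%:E <= xf)%E & v <= f r].
Proof.
case: xf => [r x0r _ fr | _ /cvgryPge/(_ v) [M [_ fM]] _ | //].
  by exists r; split => //; apply: fr.
exists (Num.max M x0 + 1); split; rewrite ?leey //.
  by rewrite ltr_pwDr // le_max lexx orbT.
by apply: fM; rewrite ltr_pwDr // le_max lexx.
Qed.

Lemma approx_integral_expRN_increasing {f df : R -> R} {x0 : R} {xf : \bar R} :
  (forall x : R, is_derive x 1 f (df x)) ->
  (forall x, eoitv x0%:E xf x -> 0 < df x) ->
  (forall x y, eoitv x0%:E xf x -> eoitv x0%:E xf y -> x < y -> df x < df y) ->
  (x0%:E < xf)%E -> f x @[x --> +oo] --> +oo ->
  (forall r : R, xf = r%:E -> f x0 + 1 <= f r) ->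
  approx_with (expR (-1)) (\int[mu]_(x in eoitv x0%:E xf) (expR (- f x))%:E)%E
    ((expR (- f x0))%:E * mu [set x | eoitv x0%:E xf x /\ (f x0 < f x < f x0 + 1)%R])%E.
Proof.
move=> f_der df_gt0 df_incr x0xf f_pinfty f_xf.
have f_cont := is_derive_continuous f_der.
have [r [x0r rxf fr]] := exists_ge_in_eoitv x0xf f_pinfty f_xf.
have [x1 [x0x1 x1xf f_x1]] := exists_level_point f_der x0r rxf fr.
have levelE := levelset_increasing f_der df_gt0 x0x1 x1xf f_x1.
rewrite levelE lebesgue_measure_itv /= lte_fin x0x1 -EFinD -EFinM; split.
- have f_le x : x0 < x < x1 -> f x <= f x0 + 1.
    move=> /andP[x0x xx1]; rewrite -f_x1; apply/ltW.
    exact: (increasing_derive_lt f_der df_gt0 (ltW x0x) xx1 x1xf).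
  rewrite -EFinM; apply: le_trans; first exact: integral_expRN_itv_ge f_cont x0x1 f_le.
  apply: ge0_subset_integral => //; first exact: measurable_eoitv.
    exact: measurable_fun_expRN f_cont.
  by rewrite -levelE => x [].
- rewrite (expRN 1) invrK -EFinM.
  exact: (integral_expRN_le_increasing f_der df_gt0 df_incr x0x1 x1xf f_x1).
Qed.

Lemma measurable_levelset {f : R -> R} {D : set R} {a b : R} :
  continuous f -> measurable D -> measurable [set x | D x /\ a < f x < b].
Proof.
move=> f_cont mD.
have -> : [set x | D x /\ a < f x < b] = D `&` f @^-1` `]a, b[%classic.
  by apply/seteqP; split => x /=; rewrite in_itv.
exact: measurable_funTS (continuous_measurable_fun f_cont) mD _ (measurable_itv _).
Qed.

Lemma approx_integral_expRN_decreasing {f df : R -> R} {x0 : R} {xf : \bar R} :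
  (forall x : R, is_derive x 1 f (df x)) ->
  (forall x, eoitv xf x0%:E x -> df x < 0) ->
  (forall x y, eoitv xf x0%:E x -> eoitv xf x0%:E y -> x < y -> df x < df y) ->
  (xf < x0%:E)%E -> f x @[x --> -oo] --> +oo ->
  (forall r : R, xf = r%:E -> f x0 + 1 <= f r) ->
  approx_with (expR (-1)) (\int[mu]_(x in eoitv xf x0%:E) (expR (- f x))%:E)%E
    ((expR (- f x0))%:E * mu [set x | eoitv xf x0%:E x /\ (f x0 < f x < f x0 + 1)%R])%E.
Proof.
move=> f_der df_lt0 df_incr xfx0 f_ninfty f_xf.
have g_der (y : R) : is_derive y 1 (f \o -%R) (- df (- y)).
  by rewrite -mulrN1; exact: is_derive1_comp (is_deriveNid y 1) (f_der (- y)).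
have memN y : eoitv (- x0)%:E (- xf) y = eoitv xf x0%:E (- y).
  by rewrite EFinN -eoitvN.
have f_cont := is_derive_continuous f_der.
rewrite (ge0_integral_reflect (measurable_eoitv _ _) (measurable_fun_expRN f_cont));
  last by move=> x _; rewrite lee_fin expR_ge0.
rewrite -(lebesgue_measureN (measurable_levelset f_cont (measurable_eoitv _ _))).
rewrite /pushforward eoitvN -EFinN.
have -> : -%R @^-1` [set x | eoitv xf x0%:E x /\ (f x0 < f x < f x0 + 1)%R] =
    [set y | eoitv (- x0)%:E (- xf) y /\ (f x0 < (f \o -%R) y < f x0 + 1)%R].
  by apply/seteqP; split => y /=; rewrite memN.
have -> : f x0 = (f \o -%R) (- x0) by rewrite /= opprK.
apply: (approx_integral_expRN_increasing g_der).
- by move=> y; rewrite memN oppr_gt0; exact: df_lt0.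
- move=> y z; rewrite !memN => Iy Iz yz.
  by rewrite ltrN2; apply: df_incr => //; rewrite ltrN2.
- by rewrite EFinN lteN2.
- exact/cvgNy_compNP.
- by move=> r /(congr1 -%E); rewrite oppeK -EFinN => /f_xf; rewrite /= opprK.
Qed.

Lemma approx_integral_expRN_itv {f : R -> R} {a b f0 : R} :
  continuous f -> a < b -> (forall x, a < x < b -> f0 <= f x <= f0 + 1) ->
  approx_with (expR (-1)) (\int[mu]_(x in eoitv a%:E b%:E) (expR (- f x))%:E)%E
    ((expR (- f0) * (b - a))%:E).
Proof.
move=> f_cont ab f_bnd; rewrite eoitv_itv; split; rewrite -EFinM.
  by apply: integral_expRN_itv_ge => // x /f_bnd /andP[].
have f_ge x : a < x < b -> f0 <= f x by move=> /f_bnd /andP[].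
rewrite (expRN 1) invrK; apply: le_trans (integral_expRN_itv_le f_cont ab f_ge) _.
rewrite lee_fin ler_peMl // ?mulr_ge0 ?expR_ge0 ?subr_ge0 ?ltW //.
by have := expR_ge1Dx (1 : R); lra.
Qed.

Lemma approx_integral_expRN_monotone {f df : R -> R} {x0 xf : R} :
  (forall x : R, is_derive x 1 f (df x)) -> f x0 < f xf < f x0 + 1 ->
  (x0 < xf /\ (forall x, eoitv x0%:E xf%:E x -> 0 < df x)) \/
  (xf < x0 /\ (forall x, eoitv xf%:E x0%:E x -> df x < 0)) ->
  approx_with (expR (-1))
    (\int[mu]_(x in eoitv (Num.min x0 xf)%:E (Num.max x0 xf)%:E) (expR (- f x))%:E)%E
    ((expR (- f x0) * `|xf - x0|)%:E).
Proof.
move=> f_der /andP[f_lt f_gt] [[x0xf df_gt0] | [xfx0 df_lt0]].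
- rewrite (min_idPl (ltW x0xf)) (max_idPr (ltW x0xf)) gtr0_norm ?subr_gt0 //.
  apply: approx_integral_expRN_itv (is_derive_continuous f_der) x0xf _.
  move=> x /andP[x0x xxf].
  have df_pos u v : x0 <= u -> v <= xf -> forall z, u < z < v -> 0 < df z.
    move=> x0u vxf z /andP[uz zv]; apply: df_gt0; rewrite eoitv_itv /= in_itv /=.
    by rewrite (le_lt_trans x0u uz) (lt_le_trans zv vxf).
  have := is_derive_gt0_lt f_der x0x (df_pos _ _ (lexx _) (ltW xxf)).
  have := is_derive_gt0_lt f_der xxf (df_pos _ _ (ltW x0x) (lexx _)).
  lra.
- rewrite (min_idPr (ltW xfx0)) (max_idPl (ltW xfx0)) ltr0_norm ?subr_lt0 // opprB.
  apply: approx_integral_expRN_itv (is_derive_continuous f_der) xfx0 _.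
  move=> x /andP[xfx xx0].
  have Nf_der (y : R) : is_derive y 1 (fun z => - f z) (- df y) := is_deriveN (f_der y).
  have Ndf_pos u v : xf <= u -> v <= x0 -> forall z, u < z < v -> 0 < - df z.
    move=> xfu vx0 z /andP[uz zv]; rewrite oppr_gt0; apply: df_lt0.
    by rewrite eoitv_itv /= in_itv /= (le_lt_trans xfu uz) (lt_le_trans zv vx0).
  have := is_derive_gt0_lt Nf_der xfx (Ndf_pos _ _ (lexx _) (ltW xx0)).
  have := is_derive_gt0_lt Nf_der xx0 (Ndf_pos _ _ (ltW xfx) (lexx _)).
  lra.
Qed.

End approx_integral.

Theorem lemma4p4 (R : realType) :
  exists c : R, 0 < c /\
  forall p : {poly R}, poly_to_pinfty p ->
  (* (1) *)
  (forall (x0 : R) (xf : \bar R),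
     (x0%:E < xf)%E ->
     deriv_pos_incr p (eoitv x0%:E xf) ->
     (forall r : R, xf = r%:E -> p.[x0] + 1 <= p.[r]) ->
     approx_with c (int_exp_neg p (eoitv x0%:E xf))
       ((expR (- p.[x0]))%:E *
        @lebesgue_measure R [set x | eoitv x0%:E xf x /\
                                     (p.[x0] < p.[x] < p.[x0] + 1)%R])%E) /\
  (* (2) *)
  (forall (x0 : R) (xf : \bar R),
     (xf < x0%:E)%E ->
     deriv_neg_incr p (eoitv xf x0%:E) ->
     (forall r : R, xf = r%:E -> p.[x0] + 1 <= p.[r]) ->
     approx_with c (int_exp_neg p (eoitv xf x0%:E))
       ((expR (- p.[x0]))%:E *
        @lebesgue_measure R [set x | eoitv xf x0%:E x /\
                                     (p.[x0] < p.[x] < p.[x0] + 1)%R])%E) /\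
  (* (3) *)
  (forall (x0 xf : R),
     p.[x0] < p.[xf] < p.[x0] + 1 ->
     (x0 < xf /\ deriv_pos_incr p (eoitv x0%:E xf%:E)) \/
     (xf < x0 /\ deriv_neg_incr p (eoitv xf%:E x0%:E)) ->
     approx_with c
       (int_exp_neg p (eoitv (Num.min x0 xf)%:E (Num.max x0 xf)%:E))
       ((expR (- p.[x0]) * `|xf - x0|)%:E)).
Proof.
exists (expR (-1)); split; first exact: expR_gt0.
move=> p [p_pinfty p_ninfty].
have p_der (x : R) : is_derive x 1 (horner p) (p^`()).[x] := is_derive_poly p x.
split; [|split].
- move=> x0 xf x0xf [dp_gt0 dp_incr].
  exact: approx_integral_expRN_increasing p_der dp_gt0 dp_incr x0xf p_pinfty.
- move=> x0 xf xfx0 [dp_lt0 dp_incr].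
  exact: approx_integral_expRN_decreasing p_der dp_lt0 dp_incr xfx0 p_ninfty.
- move=> x0 xf p_x0xf dp_mono.
  apply: approx_integral_expRN_monotone p_der p_x0xf _.
  by case: dp_mono => -[? []]; [left | right].
Qed.
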